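(* For every feature $f \colon \mathcal{X} \to \mathbb{R}^d$ with $\mathrm{span}\{f\} = \mathcal{G}$, $H(f) = \frac12 \left( \mathbb{E}_{P_{XX'}}[k_{\mathcal{G}}(X, X')] - \mathbb{E}_{P_X P_{X'}}[k_{\mathcal{G}}(X, X')] \right)$, where the joint distribution of $X$ and $X'$ is $P_{XX'}(x, x') = \sum_{y \in \mathcal{Y}} P_Y(y) P_{X|Y=y}(x) P_{X|Y=y}(x')$.
   Context: $X, Y$ are random variables on finite alphabets $\mathcal{X}, \mathcal{Y}$ with joint distribution $P_{X,Y}$ and marginals $P_X, P_Y$. For a $d$-dimensional feature $f$, $\tilde f(x) = f(x) - \mathbb{E}[f(X)]$, $\Lambda_f = \mathbb{E}[f(X) f^T(X)]$, and the H-score is $H(f) = \frac12 \mathbb{E}\left[ \left\| \mathbb{E}[\Lambda_f^{-1/2} \tilde f(X) \mid Y] \right\|^2 \right]$. For a subspace $\mathcal{G}$ of functions $\mathcal{X}\to\mathbb{R}$ with basis $f = (f_1,\dots,f_d)^T$, the projection kernel is $k_{\mathcal{G}}(x, x') = f^T(x) \Lambda_f^{-1} f(x')$. *)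

From HB Require Import structures.
From mathcomp Require Import all_boot all_order all_algebra.
Set Implicit Arguments. Unset Strict Implicit. Unset Printing Implicit Defensive.
Import Order.TTheory GRing.Theory Num.Theory.
Local Open Scope ring_scope.

Section Defs.
Variables (R : realFieldType) (X Y : finType) (P : X -> Y -> R).

Definition is_joint_pmf : Prop :=
  (forall x y, 0 <= P x y) /\ \sum_x \sum_y P x y = 1.

Definition PX (x : X) : R := \sum_y P x y.
Definition PY (y : Y) : R := \sum_x P x y.

(* conditional P_{X|Y=y}(x) (convention: 0 when P_Y(y) = 0; such y always
   carry weight P_Y(y) = 0 below) *)
Definition PXgivenY (y : Y) (x : X) : R := P x y / PY y.

Definition meanf d (f : X -> 'cV[R]_d) : 'cV[R]_d := \sum_x PX x *: f x.
Definition centered d (f : X -> 'cV[R]_d) (x : X) : 'cV[R]_d := f x - meanf f.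
Definition Lambda d (f : X -> 'cV[R]_d) : 'M[R]_d :=
  \sum_x PX x *: (f x *m (f x)^T).

Definition condE d (v : X -> 'cV[R]_d) (y : Y) : 'cV[R]_d :=
  \sum_x PXgivenY y x *: v x.

Definition sqnorm d (v : 'cV[R]_d) : R := \sum_i (v i 0) ^+ 2.

Definition is_inv_sqrt d (L S : 'M[R]_d) : Prop :=
  S^T = S /\ (forall v : 'cV[R]_d, v != 0 -> 0 < (v^T *m S *m v) 0 0)
  /\ S *m S = invmx L.

(* H-score, with S playing the role of Lambda_f^{-1/2} *)
Definition Hscore d (f : X -> 'cV[R]_d) (S : 'M[R]_d) : R :=
  2^-1 * \sum_y PY y * sqnorm (condE (fun x => S *m centered f x) y).

(* projection kernel of span{g}, computed from the basis g *)
Definition projkernel e (g : X -> 'cV[R]_e) (x x' : X) : R :=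
  ((g x)^T *m invmx (Lambda g) *m g x') 0 0.

Definition PXX' (x x' : X) : R :=
  \sum_y PY y * PXgivenY y x * PXgivenY y x'.

Definition same_span d e (f : X -> 'cV[R]_d) (g : X -> 'cV[R]_e) : Prop :=
  (exists A : 'M[R]_(d, e), forall x, f x = A *m g x) /\
  (exists B : 'M[R]_(e, d), forall x, g x = B *m f x).

End Defs.

(* Since f and g span the same space, f = A g and g = B f with A and B
   mutually inverse, so Lambda_f^{-1} = B^T Lambda_g^{-1} B and
   A^T Lambda_f^{-1} A = Lambda_g^{-1}.  Hence the H-score only depends on the
   space: it is half the P_Y-average of the quadratic form Lambda_g^{-1}
   evaluated at E[g~(X) | Y = y].  Expanding both conditional expectations
   turns this average into E_{P_XX'}[k(X, X')] with g replaced by g~, and since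
   both marginals of P_XX' are P_X, centering g subtracts exactly
   E_{P_X P_X'}[k(X, X')]. *)
From HB Require Import structures.
From mathcomp Require Import all_boot all_order all_algebra.
Import Order.TTheory GRing.Theory Num.Theory.
Set Implicit Arguments. Unset Strict Implicit.
Local Open Scope ring_scope.

Section BilinearForm.
Variables (R : comPzRingType) (n : nat).
Implicit Types (K : 'M[R]_n) (u v w : 'cV[R]_n).

Definition bform K u v : R := (u^T *m K *m v) 0 0.

Lemma bform_suml K (I : finType) (a : I -> R) (u : I -> 'cV[R]_n) v :
  bform K (\sum_i a i *: u i) v = \sum_i a i * bform K (u i) v.
Proof.
rewrite /bform raddf_sum /= !mulmx_suml summxE; apply: eq_bigr => i _.
by rewrite linearZ /= -!scalemxAl mxE.
Qed.

Lemma bform_sumr K (I : finType) (a : I -> R) (u : I -> 'cV[R]_n) v :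
  bform K v (\sum_i a i *: u i) = \sum_i a i * bform K v (u i).
Proof.
rewrite /bform !mulmx_sumr summxE; apply: eq_bigr => i _.
by rewrite -!scalemxAr mxE.
Qed.

Lemma bformBl K u w v : bform K (u - w) v = bform K u v - bform K w v.
Proof. by rewrite /bform linearB /= !mulmxBl !mxE. Qed.

Lemma bformBr K v u w : bform K v (u - w) = bform K v u - bform K v w.
Proof. by rewrite /bform !mulmxBr !mxE. Qed.

End BilinearForm.

Lemma bform_mulmx (R : comPzRingType) m n (K : 'M[R]_m) (M : 'M[R]_(m, n))
    (u v : 'cV[R]_n) :
  bform K (M *m u) (M *m v) = bform (M^T *m K *m M) u v.
Proof. by rewrite /bform trmx_mul !mulmxA. Qed.

Lemma sqnorm_bform (R : realFieldType) n (v : 'cV[R]_n) :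
  sqnorm v = bform 1%:M v v.
Proof.
by rewrite /sqnorm /bform mulmx1 mxE; apply: eq_bigr => i _; rewrite !mxE expr2.
Qed.

Section Distribution.
Variables (R : realFieldType) (X Y : finType) (P : X -> Y -> R).

Lemma Lambda_mulmx d e (f : X -> 'cV[R]_d) (g : X -> 'cV[R]_e)
    (A : 'M[R]_(d, e)) :
  (forall x, f x = A *m g x) -> Lambda P f = A *m Lambda P g *m A^T.
Proof.
move=> fA; rewrite /Lambda mulmx_sumr mulmx_suml; apply: eq_bigr => x _.
by rewrite fA -scalemxAr -scalemxAl trmx_mul !mulmxA.
Qed.

Lemma Lambda_fixed_eq1 n (g : X -> 'cV[R]_n) (C : 'M[R]_n) :
  Lambda P g \in unitmx -> (forall x, C *m g x = g x) -> C = 1%:M.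
Proof.
move=> ug Cg; have CL : C *m Lambda P g = Lambda P g.
  rewrite /Lambda mulmx_sumr; apply: eq_bigr => x _.
  by rewrite -scalemxAr mulmxA Cg.
by rewrite -[C]mulmx1 -(mulmxV ug) mulmxA CL.
Qed.

Lemma same_span_invmx_Lambda d e (f : X -> 'cV[R]_d) (g : X -> 'cV[R]_e)
    (A : 'M[R]_(d, e)) (B : 'M[R]_(e, d)) :
  Lambda P g \in unitmx -> Lambda P f \in unitmx ->
  (forall x, f x = A *m g x) -> (forall x, g x = B *m f x) ->
  A^T *m invmx (Lambda P f) *m A = invmx (Lambda P g).
Proof.
move=> ug uf fA gB.
have BA : B *m A = 1%:M.
  by apply: (Lambda_fixed_eq1 ug) => x; rewrite -mulmxA -fA -gB.
have AB : A *m B = 1%:M.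
  by apply: (Lambda_fixed_eq1 uf) => x; rewrite -mulmxA -gB -fA.
have invLf : invmx (Lambda P f) = B^T *m invmx (Lambda P g) *m B.
  suff Lf_inv : Lambda P f *m (B^T *m invmx (Lambda P g) *m B) = 1%:M.
    by rewrite -[RHS](mulKmx uf) Lf_inv mulmx1.
  rewrite (Lambda_mulmx fA) !mulmxA -(mulmxA _ A^T) -trmx_mul BA trmx1 mulmx1.
  by rewrite -(mulmxA A) mulmxV // mulmx1 AB.
by rewrite invLf !mulmxA -trmx_mul BA trmx1 mul1mx -mulmxA BA mulmx1.
Qed.

Lemma meanf_mulmx d e (f : X -> 'cV[R]_d) (g : X -> 'cV[R]_e)
    (A : 'M[R]_(d, e)) :
  (forall x, f x = A *m g x) -> meanf P f = A *m meanf P g.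
Proof.
move=> fA; rewrite /meanf mulmx_sumr; apply: eq_bigr => x _.
by rewrite -scalemxAr fA.
Qed.

Lemma centered_mulmx d e (f : X -> 'cV[R]_d) (g : X -> 'cV[R]_e)
    (A : 'M[R]_(d, e)) :
  (forall x, f x = A *m g x) -> forall x, centered P f x = A *m centered P g x.
Proof. by move=> fA x; rewrite /centered (meanf_mulmx fA) fA mulmxBr. Qed.

Lemma condE_mulmx d e (u : X -> 'cV[R]_d) (v : X -> 'cV[R]_e)
    (M : 'M[R]_(d, e)) y :
  (forall x, u x = M *m v x) -> condE P u y = M *m condE P v y.
Proof.
move=> uM; rewrite /condE mulmx_sumr; apply: eq_bigr => x _.
by rewrite -scalemxAr uM.
Qed.

Lemma Hscore_same_span d e (f : X -> 'cV[R]_d) (g : X -> 'cV[R]_e)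
    (S : 'M[R]_d) :
  Lambda P g \in unitmx -> Lambda P f \in unitmx -> same_span f g ->
  is_inv_sqrt (Lambda P f) S ->
  let c := condE P (centered P g) in
  Hscore P f S = 2^-1 * \sum_y PY P y * bform (invmx (Lambda P g)) (c y) (c y).
Proof.
move=> ug uf [[A fA] [B gB]] [ST [_ SS]] c.
rewrite /Hscore; congr (_ * _); apply: eq_bigr => y _; congr (_ * _).
rewrite (@condE_mulmx _ _ _ (centered P g) (S *m A)) => [|x]; last first.
  by rewrite (centered_mulmx fA) mulmxA.
rewrite sqnorm_bform bform_mulmx mulmx1 trmx_mul ST !mulmxA -(mulmxA A^T) SS.
by rewrite (same_span_invmx_Lambda ug uf fA gB).
Qed.

Lemma PXX'C x x' : PXX' P x x' = PXX' P x' x.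
Proof. by apply: eq_bigr => y _; rewrite mulrAC. Qed.

Lemma sum_PXX'_bform n (K : 'M[R]_n) (u v : X -> 'cV[R]_n) :
  \sum_y PY P y * bform K (condE P u y) (condE P v y)
  = \sum_x \sum_x' PXX' P x x' * bform K (u x) (v x').
Proof.
under eq_bigr => y _ do rewrite bform_suml mulr_sumr.
rewrite exchange_big; apply: eq_bigr => x _.
under eq_bigr => y _ do rewrite bform_sumr !mulr_sumr.
rewrite exchange_big; apply: eq_bigr => x' _.
by rewrite /PXX' mulr_suml; apply: eq_bigr => y _; rewrite !mulrA.
Qed.

Lemma sum_PX_PX_bform n (K : 'M[R]_n) (v : X -> 'cV[R]_n) :
  \sum_x \sum_x' PX P x * PX P x' * bform K (v x) (v x')
  = bform K (meanf P v) (meanf P v).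
Proof.
rewrite bform_suml; apply: eq_bigr => x _.
by rewrite bform_sumr mulr_sumr; apply: eq_bigr => x' _; rewrite mulrA.
Qed.

Section JointPmf.
Hypothesis pmf : is_joint_pmf P.

Lemma PY_mul_PXgivenY y x : PY P y * PXgivenY P y x = P x y.
Proof.
have [PY0 | PYn0] := eqVneq (PY P y) 0; last by rewrite mulrC divfK.
rewrite PY0 mul0r; apply/esym/(psumr_eq0P _ PY0) => // x' _.
by case: pmf.
Qed.

Lemma sum_PXX'_r x : \sum_x' PXX' P x x' = PX P x.
Proof.
rewrite /PXX' exchange_big; apply: eq_bigr => y _.
under eq_bigr => x' _ do rewrite mulrAC PY_mul_PXgivenY.
by rewrite -mulr_suml -/(PY P y) PY_mul_PXgivenY.
Qed.

Lemma sum_PXX'_weightl (h : X -> R) :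
  \sum_x \sum_x' PXX' P x x' * h x = \sum_x PX P x * h x.
Proof. by apply: eq_bigr => x _; rewrite -mulr_suml sum_PXX'_r. Qed.

Lemma sum_PXX'_weightr (h : X -> R) :
  \sum_x \sum_x' PXX' P x x' * h x' = \sum_x PX P x * h x.
Proof.
rewrite exchange_big -sum_PXX'_weightl.
by apply: eq_bigr => x _; apply: eq_bigr => x' _; rewrite PXX'C.
Qed.

Lemma sum_PXX'_bform_centered n (K : 'M[R]_n) (v : X -> 'cV[R]_n) :
  \sum_x \sum_x' PXX' P x x' * bform K (centered P v x) (centered P v x')
  = \sum_x \sum_x' PXX' P x x' * bform K (v x) (v x')
    - bform K (meanf P v) (meanf P v).
Proof.
set m := meanf P v.
under eq_bigr => x _ do under eq_bigr => x' _ do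
  rewrite /centered bformBl !bformBr -/m !mulrBr.
under eq_bigr => x _ do rewrite !sumrB.
rewrite !sumrB.
rewrite (sum_PXX'_weightl (fun x => bform K (v x) m)).
rewrite (sum_PXX'_weightr (fun x' => bform K m (v x'))).
rewrite (sum_PXX'_weightl (fun=> bform K m m)).
have sum_PX1 : \sum_x PX P x = 1 by case: pmf.
rewrite -mulr_suml sum_PX1 mul1r -bform_sumr -bform_suml.
by rewrite [\sum_x _ *: v x]/(meanf P v) -/m subrr subr0.
Qed.

End JointPmf.

End Distribution.

Theorem proposition2 (R : realFieldType) (X Y : finType) (P : X -> Y -> R)
  (e : nat) (g : X -> 'cV[R]_e) (d : nat) (f : X -> 'cV[R]_d) (S : 'M[R]_d) :
  is_joint_pmf P ->
  Lambda P g \in unitmx ->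
  Lambda P f \in unitmx ->
  same_span f g ->
  is_inv_sqrt (Lambda P f) S ->
  Hscore P f S =
    2^-1 * (\sum_x \sum_x' PXX' P x x' * projkernel P g x x'
            - \sum_x \sum_x' PX P x * PX P x' * projkernel P g x x').
Proof.
move=> pmf ug uf span Sinv.
rewrite (Hscore_same_span ug uf span Sinv) sum_PXX'_bform.
by rewrite sum_PXX'_bform_centered // sum_PX_PX_bform.
Qed.
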